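(* Let $\varphi$ be a flow on a locally compact metric space $X$, let $S\subset X$ be a nonempty compact invariant set, and let $\mathcal M=\{M_p\mid p\in\mathbb P\}$ be a finite indexed family of mutually disjoint isolated invariant sets in $S$. The following are equivalent: (i) $\mathcal M$ is a Morse predecomposition of $S$; (ii) there exists a family $\{N_p\mid p\in\mathbb P\}$ of mutually disjoint isolating neighborhoods in $S$ such that $M_p=\operatorname{Inv}N_p$ for every $p$, and for every full solution $\gamma$ in $S$ there exist $p,q\in\mathbb P$ such that $\gamma$ wades through $N_p$ in minus infinity and wades through $N_q$ in plus infinity.
   Context: A full solution is a map $\gamma:\mathbb R\to X$ with $\gamma(s+t)=\varphi(\gamma(s),t)$; it is in $S$ if its image lies in $S$. $\alpha(\gamma)=\bigcap_{t<0}\operatorname{cl}\gamma((-\infty,t])$, $\omega(\gamma)=\bigcap_{t>0}\operatorname{cl}\gamma([t,\infty))$. $\operatorname{Inv}N=\{x\in N\mid\varphi(x,\mathbb R)\subset N\}$; invariant means $\operatorname{Inv}$ of itself. Isolating neighborhoods and isolated invariant sets ''in $S$'' refer to the flow restricted to $S$: a compact $N\subset S$ is an isolating neighborhood if $\operatorname{Inv}N\subset\operatorname{int}_S N$; isolated invariant sets are those of the form $\operatorname{Inv}N$ for such $N$. A full solution $\gamma$ in $S$ is a link from $S_1$ to $S_2$ if $\alpha(\gamma)\cap S_1\ne\emptyset\ne\omega(\gamma)\cap S_2$. A Morse predecomposition of $S$ is an indexed family of mutually disjoint closed invariant subsets $\{M_p\mid p\in\mathbb P\}$ of $S$ such that every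 full solution in $S$ is a link from $M_p$ to $M_q$ for some $p,q$. A full solution $\gamma$ wades through $N$ in plus infinity if there are real sequences $(t^-_n),(t^+_n)$ with $t^-_n\to+\infty$, $t^+_n-t^-_n\to+\infty$ and $\gamma([t^-_n,t^+_n])\subset N$ for all $n$; it wades through $N$ in minus infinity if there are such sequences with $t^+_n\to-\infty$, $t^+_n-t^-_n\to+\infty$ and $\gamma([t^-_n,t^+_n])\subset N$ for all $n$. *)

From HB Require Import structures.
From mathcomp Require Import all_boot all_order all_algebra.
From mathcomp Require Import all_classical all_reals all_analysis.
Set Implicit Arguments. Unset Strict Implicit. Unset Printing Implicit Defensive.
Import Order.TTheory GRing.Theory Num.Theory.
Import numFieldTopology.Exports.
Local Open Scope classical_set_scope.
Local Open Scope ring_scope.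

Section Flows.
Context {R : realType} {X : topologicalType}.

Definition is_flow (phi : X -> R -> X) : Prop :=
  [/\ continuous (fun p : X * R => phi p.1 p.2),
      (forall x, phi x 0 = x) &
      (forall x s t, phi (phi x s) t = phi x (s + t))].

Definition full_solution (phi : X -> R -> X) (gamma : R -> X) : Prop :=
  forall s t, gamma (s + t) = phi (gamma s) t.

Definition full_solution_in (phi : X -> R -> X) (S : set X) (gamma : R -> X) : Prop :=
  full_solution phi gamma /\ (forall t, S (gamma t)).

Definition alpha_limit (gamma : R -> X) : set X :=
  \bigcap_(t in [set t : R | t < 0]) closure (gamma @` [set s | s <= t]).

Definition omega_limit (gamma : R -> X) : set X :=
  \bigcap_(t in [set t : R | 0 < t]) closure (gamma @` [set s | t <= s]).

Definition InvN (phi : X -> R -> X) (N : set X) : set X :=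
  [set x | N x /\ forall t, N (phi x t)].

Definition flow_invariant (phi : X -> R -> X) (A : set X) : Prop := InvN phi A = A.

Definition rel_interior (S N : set X) : set X :=
  [set x | exists U : set X, [/\ open U, U x & U `&` S `<=` N]].

Definition isolating_nbhd_in (phi : X -> R -> X) (S N : set X) : Prop :=
  [/\ compact N, N `<=` S & InvN phi N `<=` rel_interior S N].

Definition isolated_invariant_in (phi : X -> R -> X) (S M : set X) : Prop :=
  exists N, isolating_nbhd_in phi S N /\ M = InvN phi N.

Definition is_link (gamma : R -> X) (S1 S2 : set X) : Prop :=
  alpha_limit gamma `&` S1 !=set0 /\ omega_limit gamma `&` S2 !=set0.

Definition mutually_disjoint {P : Type} (M : P -> set X) : Prop :=
  forall p q, p <> q -> M p `&` M q = set0.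

Definition Morse_predecomposition (phi : X -> R -> X) (S : set X)
    {P : Type} (M : P -> set X) : Prop :=
  [/\ mutually_disjoint M,
      (forall p, closed (M p) /\ flow_invariant phi (M p) /\ M p `<=` S) &
      (forall gamma, full_solution_in phi S gamma ->
         exists p q, is_link gamma (M p) (M q))].

Definition wades_plus (gamma : R -> X) (N : set X) : Prop :=
  exists tm tp : nat -> R,
    tm @ \oo --> +oo /\ (fun n => tp n - tm n) @ \oo --> +oo /\
    forall n t, tm n <= t <= tp n -> N (gamma t).

Definition wades_minus (gamma : R -> X) (N : set X) : Prop :=
  exists tm tp : nat -> R,
    tp @ \oo --> -oo /\ (fun n => tp n - tm n) @ \oo --> +oo /\
    forall n t, tm n <= t <= tp n -> N (gamma t).

End Flows.

From HB Require Import structures.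
From mathcomp Require Import all_boot all_order all_algebra.
From mathcomp Require Import all_classical all_reals all_analysis.
From mathcomp Require Import lra.
Set Implicit Arguments. Unset Strict Implicit. Unset Printing Implicit Defensive.
Import Order.TTheory GRing.Theory Num.Theory.
Import numFieldTopology.Exports.
Local Open Scope classical_set_scope.
Local Open Scope ring_scope.

(* A solution gamma in S wades through an isolating neighbourhood N at +oo
   exactly when omega(gamma) meets Inv N, and at -oo exactly when alpha(gamma)
   does.  If y lies in omega(gamma) and in Inv N, its whole orbit lies in the
   interior of N relative to S; by the tube lemma, points of S close to y stay
   in N during [-n, n], and gamma comes that close to y at arbitrarily late
   times.  Conversely, the midpoints of the wading windows have a cluster point
   y in the compact set N; it lies in omega(gamma), and each phi(y, t) is a
   limit of points gamma(c_n + t) of N, so y lies in Inv N.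
   Hence (ii) implies (i), and for the converse it only remains to make
   isolating neighbourhoods of the M_p disjoint: intersect them with closed
   r-neighbourhoods of the compact, pairwise disjoint M_p, which are pairwise
   disjoint for small r. *)

Section thickening.
Context {R : realFieldType} {X : pseudoMetricType R}.

Definition thickening (A : set X) (r : R) : set X :=
  closure (\bigcup_(a in A) ball a r).

Lemma nbhs_thickening (A : set X) r x : 0 < r -> A x -> nbhs x (thickening A r).
Proof.
move=> r0 Ax; apply: filterS _ (nbhsx_ballx x r r0) => y xy.
by apply: subset_closure; exists x.
Qed.

Lemma compact_closed_disjoint_ball (A B : set X) :
  compact A -> closed B -> A `&` B = set0 ->
  \forall e \near 0^'+, forall a x, A a -> ball a e x -> ~ B x.
Proof.
move=> cA cB AB.
have nearA a : A a -> \forall a' \near a & e \near 0^'+,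
    forall x, ball a' e x -> ~ B x.
  move=> Aa.
  have : nbhs a (~` B).
    apply: open_nbhs_nbhs; split; first by rewrite openC.
    by move=> Ba; rewrite -subset0 in AB; exact: (AB a).
  move=> /nbhs_ballP [d /= d0 dB].
  exists (ball a (d / 2), [set e | e < d / 2]) => /=.
    by split; [apply: nbhsx_ballx | apply: nbhs_right_lt]; lra.
  move=> [a' e] /= [aa' ed] x a'x; apply: dB.
  by apply: (@le_ball _ _ _ (d / 2 + e)); [lra | exact: ball_triangle aa' a'x].
apply: filterS _ ((compact_near_coveringP A).1 cA R 0^'+ _ _ nearA).
by move=> e eA a x Aa; exact: eA.
Qed.

Lemma mutually_disjoint_thickening (P : finType) (M : P -> set X) :
  (forall p, compact (M p)) -> (forall p, closed (M p)) ->
  mutually_disjoint M ->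
  exists2 r, 0 < r & mutually_disjoint (fun p => thickening (M p) r).
Proof.
move=> cM clM disjM.
have : \forall e \near 0^'+, forall pq : P * P, pq.1 <> pq.2 ->
    forall a x, M pq.1 a -> ball a e x -> ~ M pq.2 x.
  apply: filter_forall => -[p q] /=; have [->|/eqP pq] := eqVneq p q.
    by apply: nearW.
  have := compact_closed_disjoint_ball (cM p) (clM q) (disjM p q pq).
  by apply: filterS => e eM _.
move=> /(filterI (nbhs_right_gt 0)) /filter_ex [e [e0 eM]].
have e4 : 0 < e / 4 by lra.
exists (e / 4) => // p q pq.
apply/seteqP; split=> // x [xp xq].
have [z [[a Ma az] xz]] := xp _ (nbhsx_ballx x _ e4).
have [z' [[b Mb bz'] xz']] := xq _ (nbhsx_ballx x _ e4).
apply: (eM (p, q) pq a b Ma _ Mb).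
apply: (@le_ball _ _ _ (e / 4 + e / 4 + e / 4 + e / 4)); first lra.
apply: ball_triangle (ball_sym bz'); apply: ball_triangle xz'.
exact: ball_triangle az (ball_sym xz).
Qed.

End thickening.

Section wading.
Context {R : realType} {X : topologicalType}.
Implicit Types (gamma : R -> X) (N : set X).

Lemma natr_le_cvgy (f : nat -> R) : (forall n, n%:R <= f n) -> f @ \oo --> +oo.
Proof.
move=> f_ge; apply: (@ger_cvgy _ _ _ _ (fun n : nat => n%:R : R)).
  exact: nearW.
exact: cvgr_idn.
Qed.

Lemma wades_plus_windows gamma N (s : nat -> R) :
  (forall n, n%:R <= s n - n%:R) ->
  (forall n t, s n - n%:R <= t <= s n + n%:R -> N (gamma t)) ->
  wades_plus gamma N.
Proof.
move=> s_ge win; exists (fun n => s n - n%:R), (fun n => s n + n%:R).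
split; [exact: natr_le_cvgy | split=> //].
by apply: natr_le_cvgy => n; have := ler0n R n; lra.
Qed.

Lemma wades_minus_windows gamma N (s : nat -> R) :
  (forall n, n%:R <= - (s n + n%:R)) ->
  (forall n t, s n - n%:R <= t <= s n + n%:R -> N (gamma t)) ->
  wades_minus gamma N.
Proof.
move=> s_le win; exists (fun n => s n - n%:R), (fun n => s n + n%:R).
split; [exact/cvgNry/natr_le_cvgy | split=> //].
by apply: natr_le_cvgy => n; have := ler0n R n; lra.
Qed.

Lemma window_midpoints gamma N (tm tp : nat -> R) :
  (fun n => tp n - tm n) @ \oo --> +oo ->
  (forall n t, tm n <= t <= tp n -> N (gamma t)) ->
  forall t, \forall n \near \oo, N (gamma ((tm n + tp n) / 2 + t)).
Proof.
move=> /cvgry_ge long win t; apply: filterS (long (2 * `|t|)) => n tn.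
apply: win; have := ler_norm t; have := ler_norm (- t); rewrite normrN.
by move=> ? ?; apply/andP; split; lra.
Qed.

Lemma omega_limit_cluster gamma (c : nat -> R) y :
  c @ \oo --> +oo -> cluster ((gamma \o c) @ \oo) y -> omega_limit gamma y.
Proof.
move=> /cvgry_ge c_ge cly t _ B By; apply: cly By.
by apply: filterS (c_ge t) => n tn; exists (c n).
Qed.

Lemma alpha_limit_cluster gamma (c : nat -> R) y :
  c @ \oo --> -oo -> cluster ((gamma \o c) @ \oo) y -> alpha_limit gamma y.
Proof.
move=> /cvgrNy_le c_le cly t _ B By; apply: cly By.
by apply: filterS (c_le t) => n tn; exists (c n).
Qed.

End wading.

Section flow.
Context {R : realType} {X : topologicalType} (phi : X -> R -> X).
Hypothesis flow_phi : is_flow phi.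

Lemma flow_near2 y t U : nbhs (phi y t) U ->
  \forall x \near y & s \near t, U (phi x s).
Proof. by case: flow_phi => cont _ _ /(cont (y, t)). Qed.

Lemma flow_near y t U : nbhs (phi y t) U -> \forall x \near y, U (phi x t).
Proof.
move=> /flow_near2 [[A B] /= [Ay Bt] AB].
apply: filterS Ay => x Ax; apply: (AB (x, t)).
by split=> //; exact: nbhs_singleton.
Qed.

Lemma InvN_flow N x t : InvN phi N x -> InvN phi N (phi x t).
Proof.
by case: flow_phi => _ _ flowD [Nx Nphi]; split=> // s; rewrite flowD.
Qed.

Lemma flow_invariant_InvN N : flow_invariant phi (InvN phi N).
Proof.
apply/seteqP; split=> x; first by case.
by move=> Ix; split=> // t; exact: InvN_flow.
Qed.

Lemma closed_InvN N : closed N -> closed (InvN phi N).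
Proof.
move=> clN x clx; have [_ flow0 _] := flow_phi.
have Nflow t : N (phi x t).
  apply: clN => B /flow_near Bx.
  by have [z [[_ Nz] Bz]] := clx _ Bx; exists (phi z t).
by split=> //; rewrite -(flow0 x); exact: Nflow.
Qed.

Lemma isolating_nbhdI S N U : isolating_nbhd_in phi S N -> closed U ->
  (forall x, InvN phi N x -> nbhs x U) ->
  isolating_nbhd_in phi S (N `&` U) /\ InvN phi (N `&` U) = InvN phi N.
Proof.
move=> [cN NS NI] clU NU.
have InvNI : InvN phi (N `&` U) = InvN phi N.
  apply/seteqP; split=> x.
    by case=> -[Nx _] NUx; split=> // t; case: (NUx t).
  move=> Ix; have IU z : InvN phi N z -> (N `&` U) z.
    by move=> Iz; split; [case: Iz | exact: nbhs_singleton (NU z Iz)].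
  by split=> [|t]; apply: IU => //; exact: InvN_flow.
split=> //; split; first exact: compact_closedI.
  by move=> x [/NS].
rewrite InvNI => x Ix; have [V [oV Vx VN]] := NI x Ix.
exists (V `&` interior U); split; first exact: openI (@open_interior _ _).
  by split; [|exact: NU].
by move=> z [[Vz /interior_subset Uz] Sz]; split=> //; exact: VN.
Qed.

Lemma near_flow_segment S N y (h : R) :
  (forall t, rel_interior S N (phi y t)) ->
  \forall x \near y, forall t, -h <= t <= h -> S (phi x t) -> N (phi x t).
Proof.
move=> yN; have := @segment_compact R (-h) h; rewrite compact_near_coveringP.
move=> /(_ X (nbhs y) (fun x t => S (phi x t) -> N (phi x t)) _) near_seg.
have /near_seg : forall t, [set` `[-h, h]] t ->
    \forall t' \near t & x \near y, S (phi x t') -> N (phi x t').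
  move=> t _; have [U [oU Uy US]] := yN t.
  have [[A B] /= [Ay Bt] AB] := flow_near2 (open_nbhs_nbhs (conj oU Uy)).
  exists (B, A) => // -[s x] /= [Bs Ax] Sx; apply: US; split=> //.
  exact: (AB (x, s)).
by apply: filterS => x xN t ht; apply: xN; rewrite /= in_itv.
Qed.

Lemma wades_plus_of_omega S N gamma : full_solution_in phi S gamma ->
  InvN phi N `<=` rel_interior S N ->
  omega_limit gamma `&` InvN phi N !=set0 -> wades_plus gamma N.
Proof.
move=> [solg Sg] NI [y [oy Iy]].
have window n : exists s : R, n%:R <= s - n%:R /\
    forall t, s - n%:R <= t <= s + n%:R -> N (gamma t).
  have near_y := near_flow_segment n%:R (fun t => NI _ (InvN_flow t Iy)).
  have n_ge0 := ler0n R n.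
  have [|_ [[s /= s_ge <-] s_near]] := oy (n%:R * 2 + 1) _ _ near_y.
    by rewrite /=; lra.
  exists s; split=> [|t /andP[t_ge t_le]]; first lra.
  rewrite -(subrKC s t) solg; apply: s_near; first by apply/andP; split; lra.
  by rewrite -solg.
have [s s_win] := choice window.
exact: wades_plus_windows (fun n => (s_win n).1) (fun n => (s_win n).2).
Qed.

Lemma wades_minus_of_alpha S N gamma : full_solution_in phi S gamma ->
  InvN phi N `<=` rel_interior S N ->
  alpha_limit gamma `&` InvN phi N !=set0 -> wades_minus gamma N.
Proof.
move=> [solg Sg] NI [y [ay Iy]].
have window n : exists s : R, n%:R <= - (s + n%:R) /\
    forall t, s - n%:R <= t <= s + n%:R -> N (gamma t).
  have near_y := near_flow_segment n%:R (fun t => NI _ (InvN_flow t Iy)).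
  have n_ge0 := ler0n R n.
  have [|_ [[s /= s_le <-] s_near]] := ay (- (n%:R * 2 + 1)) _ _ near_y.
    by rewrite /=; lra.
  exists s; split=> [|t /andP[t_ge t_le]]; first lra.
  rewrite -(subrKC s t) solg; apply: s_near; first by apply/andP; split; lra.
  by rewrite -solg.
have [s s_win] := choice window.
exact: wades_minus_windows (fun n => (s_win n).1) (fun n => (s_win n).2).
Qed.

Lemma InvN_cluster N gamma (c : nat -> R) y :
  full_solution phi gamma -> closed N ->
  (forall t, \forall n \near \oo, N (gamma (c n + t))) ->
  cluster ((gamma \o c) @ \oo) y -> InvN phi N y.
Proof.
move=> solg clN Nc cly; have [_ flow0 _] := flow_phi.
have Nflow t : N (phi y t).
  apply: clN => B /flow_near By.
  have Fc : ((gamma \o c) @ \oo) [set x | N (phi x t)].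
    by apply: filterS (Nc t) => n /=; rewrite solg.
  have [x [Nx Bx]] := cly _ _ Fc By.
  by exists (phi x t).
by split=> //; rewrite -(flow0 y); exact: Nflow.
Qed.

Hypothesis hausdorffX : hausdorff_space X.

Lemma compact_InvN N : compact N -> compact (InvN phi N).
Proof.
move=> cN; apply: (subclosed_compact _ cN); last by move=> x [].
exact: closed_InvN (compact_closed hausdorffX cN).
Qed.

Lemma cluster_midpoints_InvN N gamma (tm tp : nat -> R) :
  full_solution phi gamma -> compact N ->
  (fun n => tp n - tm n) @ \oo --> +oo ->
  (forall n t, tm n <= t <= tp n -> N (gamma t)) ->
  exists2 y, cluster ((fun n => gamma ((tm n + tp n) / 2)) @ \oo) y
    & InvN phi N y.
Proof.
move=> solg cN long win; have Nc := window_midpoints long win.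
have [y [_ cly]] :
    N `&` cluster ((fun n => gamma ((tm n + tp n) / 2)) @ \oo) !=set0.
  by apply: cN; apply: filterS (Nc 0) => n; rewrite addr0.
exists y => //.
exact: InvN_cluster solg (compact_closed hausdorffX cN) Nc cly.
Qed.

Lemma omega_of_wades_plus N gamma : full_solution phi gamma -> compact N ->
  wades_plus gamma N -> omega_limit gamma `&` InvN phi N !=set0.
Proof.
move=> solg cN [tm [tp [tm_oo [long win]]]].
have [y cly Iy] := cluster_midpoints_InvN solg cN long win.
exists y; split=> //; apply: omega_limit_cluster cly.
apply: (@ger_cvgy _ _ _ _ tm); last exact: tm_oo.
by apply: filterS (cvgry_ge long 0) => n; lra.
Qed.

Lemma alpha_of_wades_minus N gamma : full_solution phi gamma -> compact N ->
  wades_minus gamma N -> alpha_limit gamma `&` InvN phi N !=set0.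
Proof.
move=> solg cN [tm [tp [tp_oo [long win]]]].
have [y cly Iy] := cluster_midpoints_InvN solg cN long win.
exists y; split=> //; apply: alpha_limit_cluster cly.
apply: (@ler_cvgNy _ _ _ _ tp); last exact: tp_oo.
by apply: filterS (cvgry_ge long 0) => n; lra.
Qed.

Lemma wades_plusP S N gamma : isolating_nbhd_in phi S N ->
  full_solution_in phi S gamma ->
  wades_plus gamma N <-> omega_limit gamma `&` InvN phi N !=set0.
Proof.
move=> [cN _ NI] solg; split; first exact: omega_of_wades_plus solg.1 cN.
exact: wades_plus_of_omega solg NI.
Qed.

Lemma wades_minusP S N gamma : isolating_nbhd_in phi S N ->
  full_solution_in phi S gamma ->
  wades_minus gamma N <-> alpha_limit gamma `&` InvN phi N !=set0.
Proof.
move=> [cN _ NI] solg; split; first exact: alpha_of_wades_minus solg.1 cN.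
exact: wades_minus_of_alpha solg NI.
Qed.

End flow.

Lemma disjoint_isolating_nbhds {R : realType} {X : metricType R}
    (phi : X -> R -> X) (S : set X) (P : finType) (M : P -> set X) :
  is_flow phi -> mutually_disjoint M ->
  (forall p, isolated_invariant_in phi S (M p)) ->
  exists N : P -> set X, mutually_disjoint N /\
    forall p, isolating_nbhd_in phi S (N p) /\ M p = InvN phi (N p).
Proof.
move=> flow_phi disjM isoM; have hausdorffX := @metric_hausdorff R X.
have [N0 N0P] := choice isoM.
have cM p : compact (M p).
  by rewrite (N0P p).2; apply: compact_InvN => //; case: (N0P p).1.
have [r r0 disjT] := mutually_disjoint_thickening cM
  (fun p => compact_closed hausdorffX (cM p)) disjM.
exists (fun p => N0 p `&` thickening (M p) r); split.
  by move=> p q /disjT; rewrite -!subset0 => Tpq x [[_ Tp] [_ Tq]]; exact: Tpq.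
move=> p; have Mr x : InvN phi (N0 p) x -> nbhs x (thickening (M p) r).
  by rewrite -(N0P p).2; exact: nbhs_thickening.
have [isoNp ->] := isolating_nbhdI flow_phi (N0P p).1 (@closed_closure _ _) Mr.
by rewrite -(N0P p).2.
Qed.

Theorem theorem5p22 (R : realType) (X : metricType R) (phi : X -> R -> X)
    (S : set X) (P : finType) (M : P -> set X) :
  locally_compact [set: X] ->
  is_flow phi ->
  S !=set0 -> compact S -> flow_invariant phi S ->
  mutually_disjoint M ->
  (forall p, isolated_invariant_in phi S (M p)) ->
  (Morse_predecomposition phi S M <->
   exists N : P -> set X,
     [/\ mutually_disjoint N,
         (forall p, isolating_nbhd_in phi S (N p)),
         (forall p, M p = InvN phi (N p)) &
         (forall gamma, full_solution_in phi S gamma ->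
            exists p q, wades_minus gamma (N p) /\ wades_plus gamma (N q))]).
Proof.
move=> _ flow_phi _ _ _ disjM isoM; have hausdorffX := @metric_hausdorff R X.
split.
- case=> _ _ link.
  have [N [disjN isoN]] := disjoint_isolating_nbhds flow_phi disjM isoM.
  exists N; split=> // [p|p|gamma solg]; try by case: (isoN p).
  have [p [q []]] := link gamma solg; rewrite (isoN p).2 (isoN q).2 => Ap Oq.
  exists p, q; split.
    exact/(wades_minusP flow_phi hausdorffX (isoN p).1 solg).
  exact/(wades_plusP flow_phi hausdorffX (isoN q).1 solg).
- case=> N [disjN isoN MN wade]; split=> // [p|gamma solg].
  + have [cN NS _] := isoN p; rewrite MN; split.
      exact: closed_InvN (compact_closed hausdorffX cN).
    by split; [exact: flow_invariant_InvN | move=> x [/NS]].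
  + have [p [q [wm wp]]] := wade gamma solg; exists p, q; rewrite /is_link !MN.
    split; first exact/(wades_minusP flow_phi hausdorffX (isoN p) solg).
    exact/(wades_plusP flow_phi hausdorffX (isoN q) solg).
Qed.
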